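(* Let $k$ be a field, $V$ an $n$-dimensional $k$-vector space, $S=\operatorname{Sym}V=k[x_1,\dots,x_n]$, and suppose $f\in S_{d+1}$ is a direct sum; let $\bar f$ be its image in $\mathbb{P}S_{d+1}$. Then: (1) If $k\neq\mathbb{F}_2$, there is a non-trivial one-parameter subgroup $\rho\colon\mathbb{G}_m\hookrightarrow\mathrm{SL}(V)$ defined over $k$ such that $\rho\cdot\langle\nabla f\rangle=\langle\nabla f\rangle$ but $\rho\cdot\bar f\neq\bar f$. Consequently $\mathrm{Stab}_{\mathrm{SL}(V)}(\bar f)$ is a proper subgroup of $\mathrm{Stab}_{\mathrm{SL}(V)}(\langle\nabla f\rangle)$. (2) The set of $k$-points of $\{\bar g\in\mathbb{P}S_{d+1}\mid\langle\nabla g\rangle=\langle\nabla f\rangle\}$ contains a family of pairwise distinct points indexed by $k^*=k\setminus\{0\}$. (3) If moreover $\dim_k\langle\nabla f\rangle=n$, then the point $\nabla f\in\operatorname{Grass}(n,S_d)$ is a balanced direct sum, and the set of $k$-points of $\{\bar g\in\mathbb{P}S_{d+1}\mid\langle\nabla g\rangle=\langle\nabla f\rangle \text{ and } \langle\nabla(f-cg)\rangle\neq 0 \text{ for all } c\in k\}$ contains a family of pairwise distinct points indexed by $k\setminus\{0,1\}$.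
   Context: For $f\in S_{d+1}$, $\langle\nabla f\rangle=\langle\partial f/\partial x_1,\dots,\partial f/\partial x_n\rangle\subset S_d$ is the $k$-span of the first partials; when it has dimension $n$, $\nabla f$ denotes the corresponding point of $\operatorname{Grass}(n,S_d)$. A form $f\in S_{d+1}$ is a direct sum if there is a decomposition $V=U\oplus W$ and nonzero $f_1\in\operatorname{Sym}^{d+1}U$, $f_2\in\operatorname{Sym}^{d+1}W$ with $f=f_1+f_2$. A subspace $L\subset\operatorname{Sym}^dV$ of dimension $m$ is a direct sum if there is a non-trivial decomposition $V=U\oplus W$ and subspaces $L_1\subset\operatorname{Sym}^dU$, $L_2\subset\operatorname{Sym}^dW$ of dimensions $m_1+m_2=m$ with $L=L_1+L_2$; it is a balanced direct sum if moreover $m_1=\dim_kU$ and $m_2=\dim_kW$. *)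

From HB Require Import structures.
From mathcomp Require Import all_boot all_order all_algebra.
From mathcomp Require Import mpoly.
Set Implicit Arguments. Unset Strict Implicit. Unset Printing Implicit Defensive.
Import Order.TTheory GRing.Theory Num.Theory.
Local Open Scope ring_scope.

(* S = Sym V = K[x_1..x_n];  V is identified with S_1 (linear forms), an
   element of V being given by its coordinate row vector v : 'rV_n. *)
Definition linform (K : fieldType) (n : nat) (v : 'rV[K]_n) : {mpoly K[n]} :=
  \sum_(i < n) v 0 i *: 'X_i.

Definition in_sym (K : fieldType) (n : nat) (U : {vspace 'rV[K]_n}) (m : nat)
    (p : {mpoly K[n]}) : Prop :=
  exists r : seq (K * m.-tuple 'rV[K]_n),
    (forall a, a \in r -> forall v, v \in tval a.2 -> v \in U) /\
    p = \sum_(a <- r) a.1 *: \prod_(v <- tval a.2) linform v.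

Definition subsp (K : fieldType) (n : nat) := {mpoly K[n]} -> Prop.

Definition same_sp (K : fieldType) (n : nat) (L1 L2 : subsp K n) : Prop :=
  forall q, L1 q <-> L2 q.

Definition grad_span (K : fieldType) (n : nat) (f : {mpoly K[n]}) : subsp K n :=
  fun q => exists c : 'I_n -> K, q = \sum_(i < n) c i *: mderiv i f.

Definition span_fam (K : fieldType) (n m : nat) (b : 'I_m -> {mpoly K[n]}) : subsp K n :=
  fun q => exists c : 'I_m -> K, q = \sum_(i < m) c i *: b i.

Definition free_fam (K : fieldType) (n m : nat) (b : 'I_m -> {mpoly K[n]}) : Prop :=
  forall c : 'I_m -> K, \sum_(i < m) c i *: b i = 0 -> forall i, c i = 0.

Definition act (K : fieldType) (n : nat) (g : 'M[K]_n) (p : {mpoly K[n]}) : {mpoly K[n]} :=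
  p \mPo [tuple \sum_(j < n) g i j *: 'X_j | i < n].

Definition act_sp (K : fieldType) (n : nat) (g : 'M[K]_n) (L : subsp K n) : subsp K n :=
  fun q => exists p, L p /\ q = act g p.

(* equality of the points bar f, bar g of P S for nonzero f, g *)
Definition same_point (K : fieldType) (n : nat) (f g : {mpoly K[n]}) : Prop :=
  exists c : K, c != 0 /\ g = c *: f.

Definition is_direct_sum (K : fieldType) (n d : nat) (f : {mpoly K[n]}) : Prop :=
  exists (U W : {vspace 'rV[K]_n}),
    (U + W = fullv)%VS /\ (U :&: W = 0)%VS /\
    exists f1 f2 : {mpoly K[n]},
      f1 != 0 /\ f2 != 0 /\ in_sym U d.+1 f1 /\ in_sym W d.+1 f2 /\ f = f1 + f2.

Definition is_balanced_direct_sum (K : fieldType) (n d : nat) (L : subsp K n) : Prop :=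
  exists (U W : {vspace 'rV[K]_n}),
    (U + W = fullv)%VS /\ (U :&: W = 0)%VS /\ U != 0%VS /\ W != 0%VS /\
    exists (b1 : 'I_(\dim U) -> {mpoly K[n]}) (b2 : 'I_(\dim W) -> {mpoly K[n]}),
      (forall i, in_sym U d (b1 i)) /\ free_fam b1 /\
      (forall i, in_sym W d (b2 i)) /\ free_fam b2 /\
      same_sp L (fun q => exists q1 q2, span_fam b1 q1 /\ span_fam b2 q2 /\ q = q1 + q2).

(* Since G_m is a split torus,
   every such rho is diagonalizable over k: there are a k-basis (columns of an
   invertible Q) and integer weights w with sum w = 0 (det = 1) such that
   rho(t) = Q diag(t^{w_i}) Q^{-1}.  rho_at Q w iota t is rho(t) for a point t
   of G_m with values in a field K over k (via iota). *)
Definition rho_at (k K : fieldType) (n : nat) (iota : {rmorphism k -> K})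
    (Q : 'M[k]_n) (w : 'I_n -> int) (t : K) : 'M[K]_n :=
  map_mx iota Q *m diag_mx (\row_i (t ^ (w i))) *m invmx (map_mx iota Q).

Definition one_param_subgroup (k : fieldType) (n : nat) (Q : 'M[k]_n) (w : 'I_n -> int) : Prop :=
  Q \in unitmx /\ \sum_(i < n) w i = 0 /\
  (* non-trivial, and G_m -> SL(V) a closed embedding: gcd of the weights is 1 *)
  (exists i, w i != 0) /\ \big[gcdn/0%N]_(i < n) `|w i|%N = 1%N.

From HB Require Import structures.
From mathcomp Require Import all_boot all_order all_algebra.
From mathcomp Require Import mpoly fraction.
Import GRing.Theory.
Local Open Scope ring_scope.
Set Implicit Arguments. Unset Strict Implicit. Unset Printing Implicit Defensive.

(* Write f = f1 + f2 with f1 in Sym U, f2 in Sym W and V = U (+) W.  Differentiating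
   along the basis dual to a basis adapted to the splitting, the directions dual to W
   kill f1 and those dual to U kill f2; hence every partial of f1 or of f2 is a
   partial of f, and <grad f> splits along U and W (balanced when the partials of f
   are independent).  By the chain rule, a g with g.f1 = s1 f1 and g.f2 = s2 f2,
   s1, s2 <> 0, maps <grad f> onto itself.  The torus acting by t^A on U and by
   t^-C on W (determinant one when A dim U = C dim W) is such a g, yet it moves the
   point f because f1 and f2 are linearly independent; for the same reason the
   pencil f1 + c f2, c <> 0, gives pairwise distinct points sharing <grad f>. *)

Section Derivatives.
Variables (K : fieldType) (n : nat).
Implicit Types (g : 'M[K]_n) (p q : {mpoly K[n]}) (v : 'rV[K]_n) (a : 'I_n -> K).

HB.instance Definition _ g :=
  GRing.RMorphism.copy (act g) (comp_mpoly [tuple \sum_(j < n) g i j *: 'X_j | i < n]).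

Lemma actZ g c p : act g (c *: p) = c *: act g p.
Proof. exact: comp_mpolyZ. Qed.

Lemma act_X g i : act g 'X_i = \sum_(j < n) g i j *: 'X_j.
Proof. by rewrite /act comp_mpolyXU -tnth_nth tnth_mktuple. Qed.

Lemma mpoly_gen_ind (P : {mpoly K[n]} -> Prop) :
  P 1 -> (forall i, P 'X_i) -> (forall c p, P p -> P (c *: p)) ->
  (forall p q, P p -> P q -> P (p + q)) -> (forall p q, P p -> P q -> P (p * q)) ->
  forall p, P p.
Proof.
move=> P1 PX PZ PD PM; have P0 : P 0 by rewrite -(scale0r 1); apply: PZ.
elim/mpolyind => // c m p _ _ Pp; apply: PD => //; apply: PZ.
rewrite mpolyXE_id; apply: (big_ind P) => // i _.
by elim: (m i) => [|k IH]; rewrite ?expr0 // exprS; apply: PM.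
Qed.

Lemma mderivXi i j : mderiv i ('X_j : {mpoly K[n]}) = (j == i)%:R.
Proof.
rewrite mderivX mnm1E; case: eqP => [->|_]; last by rewrite scale0r.
suff -> : (U_(i) - U_(i) = 0)%MM by rewrite mpolyX0 scale1r.
by apply/mnmP => k; rewrite mnmBE subnn mnm0E.
Qed.

Lemma mderiv1 i : mderiv i (1 : {mpoly K[n]}) = 0.
Proof. by rewrite -mpolyC1 mderivC. Qed.

Lemma mderiv_act g p l :
  mderiv l (act g p) = \sum_(i < n) g i l *: act g (mderiv i p).
Proof.
elim/mpoly_gen_ind: p l => [l|j l|c p IH l|p q IHp IHq l|p q IHp IHq l].
- by rewrite rmorph1 mderiv1 big1 // => i _; rewrite mderiv1 rmorph0 scaler0.
- rewrite act_X raddf_sum /=.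
  under eq_bigr do rewrite mderivZ mderivXi.
  under [RHS]eq_bigr do rewrite mderivXi rmorph_nat.
  rewrite (bigD1 l) // [RHS](bigD1 j) //= !eqxx !big1 ?addr0 // => i /negbTE ne.
    by rewrite eq_sym ne scaler0.
  by rewrite ne scaler0.
- rewrite actZ mderivZ IH scaler_sumr; apply: eq_bigr => i _.
  by rewrite mderivZ actZ !scalerA mulrC.
- rewrite rmorphD mderivD IHp IHq -big_split; apply: eq_bigr => i _.
  by rewrite mderivD rmorphD scalerDr.
- rewrite rmorphM mderivM IHp IHq mulr_suml mulr_sumr -big_split.
  apply: eq_bigr => i _.
  by rewrite mderivM rmorphD !rmorphM scalerDr -scalerAl -scalerAr.
Qed.

Lemma sum_mulmx1 (V : lmodType K) (A B : 'M[K]_n) (F : 'I_n -> V) l :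
  A *m B = 1%:M -> \sum_(j < n) B j l *: \sum_(i < n) A i j *: F i = F l.
Proof.
move=> AB1; under eq_bigr do rewrite scaler_sumr.
rewrite exchange_big /=.
under eq_bigr => i _ do under eq_bigr => j _ do rewrite scalerA mulrC.
under eq_bigr => i _ do rewrite -scaler_suml.
under eq_bigr => i _.
  by have := congr1 (fun M : 'M_n => M i l) AB1; rewrite !mxE => ->; over.
rewrite (bigD1 l) //= eqxx scale1r big1 ?addr0 // => i /negbTE ->.
by rewrite scale0r.
Qed.

Lemma linform_is_linear : linear (@linform K n).
Proof.
move=> c v w; rewrite /linform scaler_sumr -big_split; apply: eq_bigr => i _.
by rewrite !mxE scalerDl scalerA.
Qed.

HB.instance Definition _ :=
  GRing.isLinear.Build K 'rV[K]_n {mpoly K[n]} _ (@linform K n) linform_is_linear.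

Lemma act_linform g v : act g (linform v) = linform (v *m g).
Proof.
rewrite /linform raddf_sum /=.
under eq_bigr do rewrite actZ act_X scaler_sumr.
rewrite exchange_big /=; apply: eq_bigr => j _.
by rewrite mxE scaler_suml; apply: eq_bigr => i _; rewrite scalerA.
Qed.

Definition dderiv a p := \sum_(i < n) a i *: mderiv i p.

Lemma dderiv_is_linear a : linear (dderiv a).
Proof.
move=> c p q; rewrite /dderiv scaler_sumr -big_split; apply: eq_bigr => i _.
by rewrite linearP scalerDr !scalerA mulrC.
Qed.

HB.instance Definition _ a :=
  GRing.isLinear.Build K {mpoly K[n]} {mpoly K[n]} _ (dderiv a) (dderiv_is_linear a).

Lemma dderivM a p q : dderiv a (p * q) = dderiv a p * q + p * dderiv a q.
Proof.
rewrite /dderiv mulr_suml mulr_sumr -big_split; apply: eq_bigr => i _.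
by rewrite mderivM scalerDr -scalerAl -scalerAr.
Qed.

Lemma dderiv1 a : dderiv a (1 : {mpoly K[n]}) = 0.
Proof. by rewrite /dderiv big1 // => i _; rewrite mderiv1 scaler0. Qed.

Lemma mderiv_linform i v : mderiv i (linform v) = v 0 i *: 1.
Proof.
rewrite /linform raddf_sum /= (bigD1 i) //= mderivZ mderivXi eqxx.
by rewrite big1 ?addr0 // => j /negbTE ji; rewrite mderivZ mderivXi ji scaler0.
Qed.

Lemma dderiv_linform a v : dderiv a (linform v) = (\sum_(i < n) v 0 i * a i) *: 1.
Proof.
rewrite /dderiv scaler_suml; apply: eq_bigr => i _.
by rewrite mderiv_linform scalerA mulrC.
Qed.

Lemma sum_dderiv_dir m (c : 'I_m -> K) (a : 'I_m -> 'I_n -> K) p :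
  \sum_(i < m) c i *: dderiv (a i) p = dderiv (fun j => \sum_(i < m) c i * a i j) p.
Proof.
rewrite /dderiv; under eq_bigr do rewrite scaler_sumr.
rewrite exchange_big /=; apply: eq_bigr => j _; rewrite scaler_suml.
by apply: eq_bigr => i _; rewrite scalerA.
Qed.

Lemma mderiv_dual_decomp B p l : B \in unitmx ->
  mderiv l p = \sum_(i < n) B i l *: dderiv (fun j => invmx B j i) p.
Proof. by move=> Bu; rewrite sum_mulmx1 // mulVmx. Qed.

Lemma act_mderiv_eigen g P s l : g \in unitmx -> act g P = s *: P ->
  act g (mderiv l P) = s *: dderiv (fun j => invmx g j l) P.
Proof.
move=> gu gP; rewrite -(sum_mulmx1 (fun i => act g (mderiv i P)) l (mulmxV gu)).
rewrite /dderiv scaler_sumr.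
apply: eq_bigr => j _; rewrite -mderiv_act gP mderivZ.
by rewrite !scalerA mulrC.
Qed.

Lemma mderiv_eigen g P s l : act g P = s *: P -> s != 0 ->
  mderiv l P = act g (s^-1 *: \sum_(i < n) g i l *: mderiv i P).
Proof.
move=> gP s0; rewrite actZ (raddf_sum (act g)) /=.
under eq_bigr do rewrite actZ.
by rewrite -mderiv_act gP mderivZ scalerA mulVf // scale1r.
Qed.

End Derivatives.

Section ScalarExtension.
Variables (k K : fieldType) (iota : {rmorphism k -> K}) (n : nat).
Implicit Types (p q : {mpoly k[n]}).

Lemma map_mderiv i p : map_mpoly iota (mderiv i p) = mderiv i (map_mpoly iota p).
Proof.
by apply/mpolyP => m; rewrite mcoeff_map_mpoly !mcoeff_mderiv mcoeff_map_mpoly raddfMn.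
Qed.

Lemma map_dderiv a p :
  map_mpoly iota (dderiv a p) = dderiv (fun i => iota (a i)) (map_mpoly iota p).
Proof.
rewrite /dderiv rmorph_sum; apply: eq_bigr => i _ /=.
by rewrite map_mpolyZ map_mderiv.
Qed.

Lemma map_linform (v : 'rV[k]_n) : map_mpoly iota (linform v) = linform (map_mx iota v).
Proof.
rewrite /linform rmorph_sum; apply: eq_bigr => i _ /=.
by rewrite map_mpolyZ map_mpolyX mxE.
Qed.

Lemma map_mpoly_eq0 p : (map_mpoly iota p == 0) = (p == 0).
Proof.
apply/idP/idP => [/eqP p0|/eqP ->]; last by rewrite rmorph0.
apply/eqP/mpolyP => m; have /eqP := congr1 (mcoeff m) p0.
by rewrite mcoeff_map_mpoly !mcoeff0 fmorph_eq0 => /eqP.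
Qed.

Lemma grad_span_map p q :
  grad_span p q -> grad_span (map_mpoly iota p) (map_mpoly iota q).
Proof. by move=> [c ->]; exists (fun i => iota (c i)); rewrite -[RHS]map_dderiv. Qed.

End ScalarExtension.

Lemma map_mpoly_id (k : fieldType) n (p : {mpoly k[n]}) :
  map_mpoly (idfun : {rmorphism k -> k}) p = p.
Proof. by apply/mpolyP => m; rewrite mcoeff_map_mpoly. Qed.

Section SymmetricPowers.
Variables (K : fieldType) (n : nat) (U : {vspace 'rV[K]_n}).
Implicit Types (p q : {mpoly K[n]}) (v : 'rV[K]_n) (a : 'I_n -> K).

Lemma in_sym0 m : in_sym U m 0.
Proof. by exists [::]; rewrite big_nil. Qed.

Lemma in_symD m p q : in_sym U m p -> in_sym U m q -> in_sym U m (p + q).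
Proof.
move=> [r1 [h1 ->]] [r2 [h2 ->]]; exists (r1 ++ r2); split; last by rewrite big_cat.
by move=> x; rewrite mem_cat => /orP [/h1|/h2].
Qed.

Lemma in_symZ m c p : in_sym U m p -> in_sym U m (c *: p).
Proof.
move=> [r [h ->]]; exists [seq (c * x.1, x.2) | x <- r]; split.
  by move=> x /mapP [y yr ->]; exact: h yr.
by rewrite big_map scaler_sumr; apply: eq_bigr => x _; rewrite scalerA.
Qed.

Lemma in_sym_sum m (I : eqType) (r : seq I) (F : I -> {mpoly K[n]}) :
  (forall i, i \in r -> in_sym U m (F i)) -> in_sym U m (\sum_(i <- r) F i).
Proof.
move=> h; rewrite big_seq; apply: (big_ind (in_sym U m)) => //.
- exact: in_sym0.
- exact: in_symD.
Qed.

Lemma in_sym_prod m (t : m.-tuple 'rV[K]_n) :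
  (forall v, v \in t -> v \in U) -> in_sym U m (\prod_(v <- t) linform v).
Proof.
by move=> h; exists [:: (1, t)]; split; [move=> x /[1!inE] /eqP -> | rewrite big_seq1 scale1r].
Qed.

Lemma in_sym_mull m v p : v \in U -> in_sym U m p -> in_sym U m.+1 (linform v * p).
Proof.
move=> vU [r [h ->]]; exists [seq (x.1, cons_tuple v x.2) | x <- r]; split.
  by move=> x /mapP [y yr ->] w /[1!inE] /orP [/eqP ->|]; last exact: h.
rewrite big_map mulr_sumr; apply: eq_bigr => x _ /=.
by rewrite -scalerAr big_cons.
Qed.

Lemma in_sym_homog m p : in_sym U m p -> p \is m.-homog.
Proof.
move=> [r [_ ->]]; apply: rpred_sum => -[c [s /= /eqP <-]] _; apply: rpredZ.
elim: s => [|v s IH]; first by rewrite big_nil dhomog1.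
rewrite big_cons /= -[(size s).+1]add1n; apply: dhomogM => //.
by apply: rpred_sum => i _; rewrite rpredZ // dhomogX; apply/eqP/mdeg1.
Qed.

Lemma dderiv_in_sym m a p : in_sym U m.+1 p -> in_sym U m (dderiv a p).
Proof.
move=> [r [h ->]]; rewrite raddf_sum /=; apply: in_sym_sum => -[c t] /h {}h /=.
rewrite linearZ /=; apply: in_symZ; clear r.
elim: m t h => [|m IH] t; case/tupleP: t => v t h; rewrite big_cons dderivM.
  rewrite tuple0 big_nil dderiv1 mulr0 addr0 mulr1 dderiv_linform.
  apply: in_symZ; have := @in_sym_prod 0 [tuple]; rewrite big_nil.
  by apply=> w; rewrite in_nil.
apply: in_symD.
  rewrite dderiv_linform -scalerAl mul1r; apply/in_symZ/in_sym_prod => w wt.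
  by apply: h; rewrite inE wt orbT.
apply: in_sym_mull; first by apply: h; rewrite mem_head.
by apply: IH => w wt; apply: h; rewrite inE wt orbT.
Qed.

Lemma dderiv_in_sym_eq0 m a p :
  (forall v, v \in U -> \sum_(i < n) v 0 i * a i = 0) -> in_sym U m p -> dderiv a p = 0.
Proof.
move=> ha [r [h ->]]; rewrite raddf_sum /= big1_seq // => -[c t] /h {}h /=.
rewrite linearZ /= [dderiv _ _](_ : _ = 0) ?scaler0 //.
elim: (tval t) h => [|v s IH] h; first by rewrite big_nil dderiv1.
rewrite big_cons dderivM dderiv_linform ha ?h ?mem_head // scale0r mul0r add0r.
by rewrite IH ?mulr0 // => w ws; apply: h; rewrite inE ws orbT.
Qed.

Lemma in_sym_eq0 m p : U = 0%VS -> in_sym U m.+1 p -> p = 0.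
Proof.
move=> U0 [r [h ->]]; rewrite big1_seq // => -[c t] /h /=.
case/tupleP: t => v t; rewrite U0 big_cons => /(_ v (mem_head _ _)).
by rewrite memv0 => /eqP ->; rewrite linear0 mul0r scaler0.
Qed.

End SymmetricPowers.

Lemma act_map_in_sym (k K : fieldType) (iota : {rmorphism k -> K}) n
    (U : {vspace 'rV[k]_n}) m (p : {mpoly k[n]}) (g : 'M[K]_n) s :
  in_sym U m p -> (forall v, v \in U -> map_mx iota v *m g = s *: map_mx iota v) ->
  act g (map_mpoly iota p) = s ^+ m *: map_mpoly iota p.
Proof.
move=> [r [hr ->]] hg.
rewrite (raddf_sum (map_mpoly iota)) (raddf_sum (act g)) scaler_sumr /=.
apply: eq_big_seq => -[c t] /hr {}hr /=.
rewrite map_mpolyZ actZ scalerA mulrC -scalerA; congr (_ *: _).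
rewrite (rmorph_prod (map_mpoly iota)) (rmorph_prod (act g)) /= !big_tuple.
under eq_bigr => i _ do rewrite map_linform act_linform hg ?hr ?mem_tnth // linearZ.
rewrite /= scaler_prodl card_ord; congr (_ *: _).
by apply: eq_bigr => i _; rewrite map_linform.
Qed.

Section Spans.
Variables (K : fieldType) (n m : nat) (b : 'I_m -> {mpoly K[n]}).
Implicit Types (p q : {mpoly K[n]}).

Lemma span_fam0 : span_fam b 0.
Proof. by exists (fun _ => 0); rewrite big1 // => i _; rewrite scale0r. Qed.

Lemma span_famD p q : span_fam b p -> span_fam b q -> span_fam b (p + q).
Proof.
move=> [c ->] [c' ->]; exists (fun i => c i + c' i).
by rewrite -big_split; apply: eq_bigr => i _; rewrite scalerDl.
Qed.

Lemma span_famZ c p : span_fam b p -> span_fam b (c *: p).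
Proof.
move=> [x ->]; exists (fun i => c * x i).
by rewrite scaler_sumr; apply: eq_bigr => i _; rewrite scalerA.
Qed.

Lemma span_fam_sum (I : Type) (r : seq I) (P : pred I) (F : I -> {mpoly K[n]}) :
  (forall i, P i -> span_fam b (F i)) -> span_fam b (\sum_(i <- r | P i) F i).
Proof. by move=> h; apply: big_ind => //; [exact: span_fam0 | exact: span_famD]. Qed.

Lemma span_fam_gen i : span_fam b (b i).
Proof.
exists (fun j => (j == i)%:R); rewrite (bigD1 i) //= eqxx scale1r big1 ?addr0 //.
by move=> j /negbTE ->; rewrite scale0r.
Qed.

Lemma span_fam_dderiv p a :
  (forall j, span_fam b (mderiv j p)) -> span_fam b (dderiv a p).
Proof. by move=> h; apply: span_fam_sum => j _; apply/span_famZ/h. Qed.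

End Spans.

Section GradientSpans.
Variables (K : fieldType) (n : nat).
Implicit Types (g : 'M[K]_n) (p P : {mpoly K[n]}).

Lemma grad_spanE p : grad_span p = span_fam (fun i => mderiv i p).
Proof. by []. Qed.

Lemma grad_span_dderiv p a : grad_span p (dderiv a p).
Proof. by exists a. Qed.

Lemma grad_span_subset p q :
  (forall l, grad_span q (mderiv l p)) -> forall r, grad_span p r -> grad_span q r.
Proof. by move=> h r [c ->]; apply: span_fam_sum => i _; apply/span_famZ/h. Qed.

Lemma act_sp_grad_eigen g P1 P2 s1 s2 :
    g \in unitmx -> s1 != 0 -> s2 != 0 ->
    act g P1 = s1 *: P1 -> act g P2 = s2 *: P2 ->
    (forall l, grad_span (P1 + P2) (mderiv l P1) /\ grad_span (P1 + P2) (mderiv l P2)) ->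
  same_sp (act_sp g (grad_span (P1 + P2))) (grad_span (P1 + P2)).
Proof.
rewrite !grad_spanE => gu s1_0 s2_0 gP1 gP2 hP q; split.
  move=> [_ [[c ->] ->]]; rewrite (raddf_sum (act g)) /=.
  apply: span_fam_sum => i _; rewrite actZ mderivD rmorphD /=.
  apply/span_famZ/span_famD.
    rewrite (act_mderiv_eigen _ gu gP1); apply/span_famZ/span_fam_dderiv => j.
    by case: (hP j).
  rewrite (act_mderiv_eigen _ gu gP2); apply/span_famZ/span_fam_dderiv => j.
  by case: (hP j).
move=> [c ->].
exists (\sum_(l < n) c l *: (s1^-1 *: \sum_(i < n) g i l *: mderiv i P1 +
                            s2^-1 *: \sum_(i < n) g i l *: mderiv i P2)).
split.
  apply: span_fam_sum => l _; apply/span_famZ/span_famD; apply/span_famZ;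
    by apply: span_fam_sum => i _; apply: span_famZ; case: (hP i).
rewrite (raddf_sum (act g)); apply: eq_bigr => l _ /=.
by rewrite actZ rmorphD /= mderivD -(mderiv_eigen l gP1 s1_0) -(mderiv_eigen l gP2 s2_0).
Qed.

Lemma act_sp_grad_stab g P s : g \in unitmx -> s != 0 -> act g P = s *: P ->
  same_sp (act_sp g (grad_span P)) (grad_span P).
Proof.
move=> gu s0 gP; rewrite -[P]addr0; apply: (act_sp_grad_eigen gu s0 (oner_neq0 K)) => //.
  by rewrite rmorph0 scaler0.
move=> l; rewrite addr0 mderiv0 !grad_spanE; split; [exact: span_fam_gen | exact: span_fam0].
Qed.

End GradientSpans.

Section ConjugateDiagonal.
Variables (k K : fieldType) (iota : {rmorphism k -> K}) (n : nat).
Implicit Types (Q : 'M[k]_n) (d : 'rV[K]_n).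

Definition conj_diag Q d : 'M[K]_n :=
  map_mx iota Q *m diag_mx d *m invmx (map_mx iota Q).

Lemma conj_diag_eigen Q d (v : 'rV[k]_n) s : Q \in unitmx ->
    (forall i, (v *m Q) 0 i != 0 -> d 0 i = s) ->
  map_mx iota v *m conj_diag Q d = s *: map_mx iota v.
Proof.
move=> Qu hv; rewrite /conj_diag !mulmxA -map_mxM.
suff -> : map_mx iota (v *m Q) *m diag_mx d = s *: map_mx iota (v *m Q).
  by rewrite -scalemxAl map_mxM mulmxK ?map_unitmx.
move: (v *m Q) hv => w hw; apply/rowP => j; rewrite mul_mx_diag !mxE.
have [->|/hw ->] := eqVneq (w 0 j) 0; first by rewrite rmorph0 mul0r mulr0.
by rewrite mulrC.
Qed.

Lemma conj_diag_unit Q d : Q \in unitmx -> (forall i, d 0 i != 0) ->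
  conj_diag Q d \in unitmx.
Proof.
move=> Qu d0; rewrite !unitmx_mul unitmx_inv map_unitmx Qu andbT /=.
by rewrite unitmxE det_diag unitfE; apply/prodf_neq0 => i _.
Qed.

End ConjugateDiagonal.

Lemma big_ord_split (V : nmodType) n u w (e : (u + w)%N = n) (F : 'I_n -> V) :
  \sum_(i < n) F i =
  \sum_(i < u) F (cast_ord e (lshift w i)) + \sum_(j < w) F (cast_ord e (rshift u j)).
Proof.
case: n / e F => F; rewrite big_split_ord.
by congr (_ + _); apply: eq_bigr => i _; rewrite cast_ord_id.
Qed.

Definition split_row (K : fieldType) (n u : nat) (s1 s2 : K) : 'rV[K]_n :=
  \row_(i < n) if (i < u)%N then s1 else s2.

Section Complement.
Variables (k : fieldType) (n : nat) (U W : {vspace 'rV[k]_n}).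
Hypotheses (UW_full : (U + W = fullv)%VS) (UW_cap0 : (U :&: W = 0)%VS).

Local Notation u := (\dim U).
Local Notation basis := (vbasis U ++ vbasis W : seq 'rV[k]_n).

Lemma dim_compl : (u + \dim W)%N = n.
Proof. by rewrite -dimv_disjoint_sum // UW_full dimvf; exact: mul1n. Qed.

Definition compl_mx : 'M[k]_n := \matrix_(i < n, j < n) basis`_i 0 j.

Lemma compl_mx_span o m (X : seq 'rV[k]_n) (c : 'I_m -> k) :
    (o + m <= n)%N -> (forall j : 'I_m, basis`_(o + j) = X`_j) ->
  exists2 x : 'rV[k]_n, \sum_(j < m) c j *: X`_j = x *m compl_mx &
    forall i : 'I_n, x 0 i != 0 -> (o <= i < o + m)%N.
Proof.
move=> omn hX; have lt_n (j : 'I_m) : (o + j < n)%N.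
  by apply: leq_trans omn; rewrite ltn_add2l.
exists (\sum_(j < m) c j *: delta_mx 0 (Ordinal (lt_n j))).
  rewrite mulmx_suml; apply: eq_bigr => j _; rewrite -scalemxAl -rowE -hX.
  by congr (_ *: _); apply/rowP => l; rewrite !mxE.
move=> i; apply: contraNT => /negbTE i_out; rewrite summxE big1 // => j _.
rewrite !mxE eqxx /=; case: eqP => [ij|]; last by rewrite mulr0.
by move: i_out; rewrite ij /= leq_addr ltn_add2l ltn_ord.
Qed.

Lemma compl_mx_U v : v \in U ->
  exists2 x : 'rV[k]_n, v = x *m compl_mx & forall i : 'I_n, x 0 i != 0 -> (i < u)%N.
Proof.
move=> vU; have [|j|x vx hx] :=
  compl_mx_span (o := 0) (X := vbasis U) (fun j => coord (vbasis U) j v).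
- exact: leq_trans (leq_addr _ _) (eq_leq dim_compl).
- by rewrite add0n nth_cat size_tuple ltn_ord.
by exists x; rewrite -?vx -?coord_vbasis // => i /hx.
Qed.

Lemma compl_mx_W v : v \in W ->
  exists2 x : 'rV[k]_n, v = x *m compl_mx & forall i : 'I_n, x 0 i != 0 -> (u <= i)%N.
Proof.
move=> vW; have [|j|x vx hx] :=
  compl_mx_span (o := u) (X := vbasis W) (fun j => coord (vbasis W) j v).
- exact: eq_leq dim_compl.
- by rewrite nth_cat size_tuple ltnNge leq_addr /= addKn.
by exists x; rewrite -?vx -?coord_vbasis // => i /hx /andP [].
Qed.

Lemma compl_mx_unit : compl_mx \in unitmx.
Proof.
rewrite -row_full_unit -sub1mx; apply/row_subP => i; rewrite row1.
have : delta_mx 0 i \in (U + W)%VS by rewrite UW_full memvf.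
case/memv_addP => _ /compl_mx_U [x -> _] [_ /compl_mx_W [y -> _] ->].
by rewrite -mulmxDl submxMl.
Qed.

Local Notation Q := (invmx compl_mx).

Lemma invmx_compl_unit : Q \in unitmx.
Proof. by rewrite unitmx_inv compl_mx_unit. Qed.

Lemma compl_coord_U v (i : 'I_n) : v \in U -> (u <= i)%N -> (v *m Q) 0 i = 0.
Proof.
case/compl_mx_U => x -> hx ui; rewrite mulmxK ?compl_mx_unit //.
by apply: contraTeq ui => /hx; rewrite -ltnNge.
Qed.

Lemma compl_coord_W v (i : 'I_n) : v \in W -> (i < u)%N -> (v *m Q) 0 i = 0.
Proof.
case/compl_mx_W => x -> hx iu; rewrite mulmxK ?compl_mx_unit //.
by apply: contraTeq iu => /hx; rewrite -leqNgt.
Qed.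

Definition compl_dual (i : 'I_n) : 'I_n -> k := fun j => Q j i.

Lemma dderiv_compl_dual_U m p (i : 'I_n) :
  in_sym U m p -> (u <= i)%N -> dderiv (compl_dual i) p = 0.
Proof.
move=> pU ui; apply: (dderiv_in_sym_eq0 _ pU) => v vU.
by have := compl_coord_U vU ui; rewrite mxE.
Qed.

Lemma dderiv_compl_dual_W m p (i : 'I_n) :
  in_sym W m p -> (i < u)%N -> dderiv (compl_dual i) p = 0.
Proof.
move=> pW iu; apply: (dderiv_in_sym_eq0 _ pW) => v vW.
by have := compl_coord_W vW iu; rewrite mxE.
Qed.

Lemma grad_span_summands m m' p1 p2 : in_sym U m p1 -> in_sym W m' p2 ->
  forall l, grad_span (p1 + p2) (mderiv l p1) /\ grad_span (p1 + p2) (mderiv l p2).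
Proof.
move=> p1U p2W l; rewrite !(mderiv_dual_decomp _ l compl_mx_unit) !grad_spanE.
split; apply: span_fam_sum => i _; apply: span_famZ; case: (ltnP i u) => iu.
- rewrite -[dderiv _ p1]addr0 -(dderiv_compl_dual_W p2W iu) -raddfD.
  exact: grad_span_dderiv.
- by rewrite (dderiv_compl_dual_U p1U iu); exact: span_fam0.
- by rewrite (dderiv_compl_dual_W p2W iu); exact: span_fam0.
- rewrite -[dderiv _ p2]add0r -(dderiv_compl_dual_U p1U iu) -raddfD.
  exact: grad_span_dderiv.
Qed.

Section Torus.
Variables (K : fieldType) (iota : {rmorphism k -> K}).

Local Notation torus s1 s2 := (conj_diag iota Q (split_row n u s1 s2)).

Lemma torus_unit s1 s2 : s1 != 0 -> s2 != 0 -> torus s1 s2 \in unitmx.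
Proof.
move=> s1_0 s2_0; apply: conj_diag_unit; first exact: invmx_compl_unit.
by move=> i; rewrite mxE; case: ifP.
Qed.

Lemma act_torus_U m p s1 s2 : in_sym U m p ->
  act (torus s1 s2) (map_mpoly iota p) = s1 ^+ m *: map_mpoly iota p.
Proof.
move=> pU; apply: (act_map_in_sym pU) => v vU.
apply: conj_diag_eigen => [|i nz]; first exact: invmx_compl_unit.
by rewrite mxE; case: ltnP nz => // ui; rewrite compl_coord_U ?eqxx.
Qed.

Lemma act_torus_W m p s1 s2 : in_sym W m p ->
  act (torus s1 s2) (map_mpoly iota p) = s2 ^+ m *: map_mpoly iota p.
Proof.
move=> pW; apply: (act_map_in_sym pW) => v vW.
apply: conj_diag_eigen => [|i nz]; first exact: invmx_compl_unit.
by rewrite mxE; case: ltnP nz => // iu; rewrite compl_coord_W ?eqxx.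
Qed.

End Torus.

Section DirectSum.
Variables (d : nat) (f1 f2 : {mpoly k[n]}).
Hypotheses (f1_neq0 : f1 != 0) (f2_neq0 : f2 != 0).
Hypotheses (f1U : in_sym U d.+1 f1) (f2W : in_sym W d.+1 f2).

Local Notation torus iota s1 s2 := (conj_diag iota Q (split_row n u s1 s2)).

Lemma dimU_gt0 : (0 < u)%N.
Proof.
rewrite lt0n dimv_eq0; apply: contra f1_neq0 => /eqP U0.
exact/eqP/(in_sym_eq0 U0 f1U).
Qed.

Lemma dimU_lt : (u < n)%N.
Proof.
apply: leq_trans (eq_leq dim_compl); rewrite -addn1 leq_add2l lt0n dimv_eq0.
by apply: contra f2_neq0 => /eqP W0; exact/eqP/(in_sym_eq0 W0 f2W).
Qed.

Section ScalarExtension.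
Variables (K : fieldType) (iota : {rmorphism k -> K}).
Local Notation F1 := (map_mpoly iota f1).
Local Notation F2 := (map_mpoly iota f2).

Lemma act_torus s1 s2 :
  act (torus iota s1 s2) (map_mpoly iota (f1 + f2)) = s1 ^+ d.+1 *: F1 + s2 ^+ d.+1 *: F2.
Proof. by rewrite !rmorphD /= (act_torus_U _ _ _ f1U) (act_torus_W _ _ _ f2W). Qed.

(* The torus points (1, 0) and (0, 1) are the projections onto U along W and onto W
   along U. *)
Lemma summands_free a b : a *: F1 + b *: F2 = 0 -> a = 0 /\ b = 0.
Proof.
move=> ab0; have proj s1 s2 : s1 ^+ d.+1 * a *: F1 + s2 ^+ d.+1 * b *: F2 = 0.
  have := congr1 (act (torus iota s1 s2)) ab0; rewrite rmorphD /= !actZ.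
  rewrite (act_torus_U _ _ _ f1U) (act_torus_W _ _ _ f2W) rmorph0 !scalerA.
  by rewrite !(mulrC _ a) !(mulrC _ b).
have := proj 1 0; have := proj 0 1.
rewrite !expr1n !expr0n /= !mul0r !mul1r !scale0r addr0 add0r.
move=> /eqP; rewrite scaler_eq0 map_mpoly_eq0 (negbTE f2_neq0) orbF => /eqP ->.
by move=> /eqP; rewrite scaler_eq0 map_mpoly_eq0 (negbTE f1_neq0) orbF => /eqP ->.
Qed.

Lemma torus_grad_stable s1 s2 : s1 != 0 -> s2 != 0 ->
  same_sp (act_sp (torus iota s1 s2) (grad_span (map_mpoly iota (f1 + f2))))
          (grad_span (map_mpoly iota (f1 + f2))).
Proof.
move=> s1_0 s2_0; rewrite rmorphD /=.
apply: (act_sp_grad_eigen (torus_unit iota s1_0 s2_0) (expf_neq0 _ s1_0)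
  (expf_neq0 _ s2_0) (act_torus_U _ _ _ f1U) (act_torus_W _ _ _ f2W)) => l.
rewrite -rmorphD -!map_mderiv.
by have [h1 h2] := grad_span_summands f1U f2W l; split; apply: grad_span_map.
Qed.

Lemma torus_moves s1 s2 : s1 ^+ d.+1 != s2 ^+ d.+1 ->
  ~ same_point (map_mpoly iota (f1 + f2)) (act (torus iota s1 s2) (map_mpoly iota (f1 + f2))).
Proof.
move=> s12 [c [_]]; rewrite act_torus rmorphD /= => /eqP.
rewrite -subr_eq0 scalerDr opprD addrACA -!scalerBl => /eqP /summands_free [].
by move=> /subr0_eq e1 /subr0_eq e2; rewrite e1 e2 eqxx in s12.
Qed.

End ScalarExtension.

Definition pencil (c : k) := f1 + c *: f2.

Lemma pencil_free a b : a *: f1 + b *: f2 = 0 -> a = 0 /\ b = 0.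
Proof. by move=> ab0; apply: (summands_free (iota := idfun)); rewrite !map_mpoly_id. Qed.

Lemma pencil_homog c : pencil c \is d.+1.-homog.
Proof. by rewrite rpredD ?rpredZ // (in_sym_homog f1U, in_sym_homog f2W). Qed.

Lemma pencil_neq0 c : pencil c != 0.
Proof.
apply/eqP => pc0; have := @pencil_free 1 c; rewrite scale1r => /(_ pc0) [/eqP].
by rewrite oner_eq0.
Qed.

Lemma grad_span_pencil c : c != 0 -> same_sp (grad_span (pencil c)) (grad_span (f1 + f2)).
Proof.
move=> c0 q; split; apply: grad_span_subset => l; rewrite mderivD.
  have [h1 h2] := grad_span_summands f1U f2W l.
  by rewrite mderivZ; apply: span_famD h1 (span_famZ _ h2).
have [h1 h2] := grad_span_summands f1U (in_symZ c f2W) l.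
by rewrite -(scalerK c0 (mderiv l f2)) -mderivZ; apply: span_famD h1 (span_famZ _ h2).
Qed.

Lemma pencil_distinct c c' : c != c' -> ~ same_point (pencil c) (pencil c').
Proof.
move=> cc' [e [_]]; rewrite /pencil scalerDr scalerA => /eqP.
rewrite -subr_eq0 opprD addrACA -{1}(scale1r f1) -!scalerBl => /eqP /pencil_free [].
by move=> /subr0_eq <- /subr0_eq; rewrite mul1r => e'; rewrite e' eqxx in cc'.
Qed.

Section NondegenerateGradient.
Hypothesis grad_free : free_fam (fun i => mderiv i (f1 + f2)).

Lemma dderiv_dual_sum_U (i : 'I_n) : (i < u)%N ->
  dderiv (compl_dual i) (f1 + f2) = dderiv (compl_dual i) f1.
Proof. by move=> iu; rewrite raddfD /= (dderiv_compl_dual_W f2W iu) addr0. Qed.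

Lemma dderiv_dual_sum_W (i : 'I_n) : (u <= i)%N ->
  dderiv (compl_dual i) (f1 + f2) = dderiv (compl_dual i) f2.
Proof. by move=> ui; rewrite raddfD /= (dderiv_compl_dual_U f1U ui) add0r. Qed.

Lemma compl_dual_free m (phi : 'I_m -> 'I_n) : injective phi ->
  free_fam (fun i => dderiv (compl_dual (phi i)) (f1 + f2)).
Proof.
move=> phi_inj c; rewrite sum_dderiv_dir => /grad_free c0 i0.
pose y : 'cV[k]_n := \sum_(i < m) c i *: delta_mx (phi i) 0.
have Qy : Q *m y = 0.
  apply/colP => j; rewrite mulmx_sumr summxE !mxE -[RHS](c0 j).
  by apply: eq_bigr => i _; rewrite -scalemxAr -colE !mxE mulrC.
have := congr1 (fun M : 'cV[k]_n => M (phi i0) 0) (mulKmx invmx_compl_unit y).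
rewrite Qy mulmx0 mxE summxE (bigD1 i0) //= !mxE !eqxx mulr1 big1 ?addr0 // => i ii0.
by rewrite !mxE (inj_eq phi_inj) eq_sym (negbTE ii0) mulr0.
Qed.

Lemma dderiv_compl_dual_neq0 i : dderiv (compl_dual i) (f1 + f2) != 0.
Proof.
apply/eqP => D0; have := @compl_dual_free 1 (fun _ => i) _ (fun _ => 1).
rewrite big_ord1 scale1r D0 => /(_ (fun a b _ => etrans (ord1 a) (esym (ord1 b)))).
by move=> /(_ erefl ord0) /eqP; rewrite oner_eq0.
Qed.

Lemma balanced_grad : is_balanced_direct_sum d (grad_span (f1 + f2)).
Proof.
pose lowU i := cast_ord dim_compl (lshift (\dim W) i).
pose highW j := cast_ord dim_compl (rshift u j).
exists U, W; do 2!split => //; split; last split.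
- by rewrite -dimv_eq0 -lt0n dimU_gt0.
- by rewrite -dimv_eq0 -lt0n -(ltn_add2l u) addn0 dim_compl dimU_lt.
exists (fun i => dderiv (compl_dual (lowU i)) (f1 + f2)).
exists (fun j => dderiv (compl_dual (highW j)) (f1 + f2)).
split; [|split; [|split; [|split]]].
- by move=> i; rewrite dderiv_dual_sum_U; [exact: dderiv_in_sym | rewrite /lowU /=].  
- by apply: compl_dual_free => i j /cast_ord_inj /lshift_inj.
- by move=> j; rewrite dderiv_dual_sum_W; [exact: dderiv_in_sym | rewrite /highW /= leq_addr].
- by apply: compl_dual_free => i j /cast_ord_inj /rshift_inj.
move=> q; split.
  move=> [x ->].
  under eq_bigr do
    rewrite (mderiv_dual_decomp _ _ compl_mx_unit) (big_ord_split dim_compl) scalerDr.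
  rewrite big_split /=; do 2 eexists; split; last split; last reflexivity;
    apply: span_fam_sum => l _; apply: span_famZ; apply: span_fam_sum => i _;
    exact/span_famZ/span_fam_gen.
move=> [_ [_ [[x1 ->] [[x2 ->] ->]]]].
by apply: span_famD; apply: span_fam_sum => i _; apply/span_famZ/grad_span_dderiv.
Qed.

Lemma pencil_grad_nondeg c e : c != 1 ->
  exists i : 'I_n, mderiv i (f1 + f2 - e *: pencil c) != 0.
Proof.
move=> c1; case: (pickP (fun i => mderiv i (f1 + f2 - e *: pencil c) != 0)) => [i|all0].
  by exists i.
have D0 i : dderiv (compl_dual i) ((1 - e) *: f1 + (1 - e * c) *: f2) = 0.
  rewrite /dderiv big1 // => j _; move/negbFE/eqP: (all0 j).
  rewrite /pencil scalerDr scalerA !scalerBl !scale1r addrACA opprD => ->.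
  by rewrite scaler0.
have := D0 (Ordinal (ltn_trans dimU_gt0 dimU_lt)).
rewrite raddfD /= !linearZ /= (dderiv_compl_dual_W f2W) ?dimU_gt0 // scaler0 addr0.
rewrite -dderiv_dual_sum_U ?dimU_gt0 // => /eqP.
rewrite scaler_eq0 (negbTE (dderiv_compl_dual_neq0 _)) orbF subr_eq0 => /eqP e1.
have := D0 (Ordinal dimU_lt).
rewrite raddfD /= !linearZ /= (dderiv_compl_dual_U f1U) // scaler0 add0r.
rewrite -dderiv_dual_sum_W // => /eqP.
rewrite scaler_eq0 (negbTE (dderiv_compl_dual_neq0 _)) orbF subr_eq0 -e1 mul1r.
by move=> /eqP c1'; rewrite -c1' eqxx in c1.
Qed.

End NondegenerateGradient.

End DirectSum.

End Complement.

Definition split_weight (n u A C : nat) (i : 'I_n) : int :=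
  if (i < u)%N then A%:Z else - C%:Z.

Lemma rho_at_split_weight (k K : fieldType) (iota : {rmorphism k -> K}) n u
    (Q : 'M[k]_n) A C (t : K) :
  rho_at iota Q (split_weight u A C) t = conj_diag iota Q (split_row n u (t ^+ A) (t ^- C)).
Proof.
rewrite /rho_at /conj_diag; congr (_ *m diag_mx _ *m _); apply/rowP => i.
by rewrite !mxE /split_weight; case: ifP => // _; rewrite exprnN.
Qed.

Lemma one_param_split_weight (k : fieldType) n u (Q : 'M[k]_n) :
    Q \in unitmx -> (0 < u < n)%N ->
  exists A C : nat, (0 < A)%N /\ one_param_subgroup Q (split_weight u A C).
Proof.
move=> Qu /andP [u0 un]; set g := gcdn u (n - u).
have g_gt0 : (0 < g)%N by rewrite gcdn_gt0 u0.
have [gu gnu] : (g %| u)%N /\ (g %| n - u)%N by rewrite dvdn_gcdl dvdn_gcdr.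
set A := ((n - u) %/ g)%N; set C := (u %/ g)%N.
have A_gt0 : (0 < A)%N by rewrite divn_gt0 // dvdn_leq ?subn_gt0.
pose i0 : 'I_n := Ordinal (ltn_trans u0 un); pose iu : 'I_n := Ordinal un.
have w_i0 : split_weight u A C i0 = A by rewrite /split_weight u0.
have w_iu : split_weight u A C iu = - C%:Z by rewrite /split_weight ltnn.
exists A, C; split => //; split => //; split; [|split].
- rewrite (big_ord_split (subnKC (ltnW un))) /split_weight.
  under eq_bigr => i _ do rewrite /= ltn_ord.
  under [X in _ + X]eq_bigr => j _ do rewrite /= ltnNge leq_addr /=.
  rewrite !sumr_const !card_ord mulNrn !pmulrn !mulrzz -!PoszM.
  suff -> : (A * u)%N = (C * (n - u))%N by rewrite subrr.
  by rewrite !divn_mulAC // mulnC.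
- by exists i0; rewrite w_i0 eqz_nat -lt0n.
apply/eqP; rewrite -dvdn1.
have hA := @biggcdn_inf _ i0 predT (fun i => `|split_weight u A C i|%N) A erefl.
have hC := @biggcdn_inf _ iu predT (fun i => `|split_weight u A C i|%N) C erefl.
rewrite w_i0 w_iu abszN !absz_nat dvdnn in hA hC.
suff <- : gcdn A C = 1%N by rewrite dvdn_gcd hA // hC.
have : (gcdn A C * g = g)%N by rewrite muln_gcdl !divnK // /g gcdnC.
by move=> /eqP; rewrite -{2}[g]mul1n eqn_pmul2r // => /eqP.
Qed.

Lemma fracX_pow_neq (k : fieldType) (A C d : nat) : (0 < A)%N ->
  (tofrac ('X : {poly k}) ^+ A) ^+ d.+1 != (tofrac ('X : {poly k}) ^- C) ^+ d.+1.
Proof.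
move=> A_gt0; have X0 : tofrac ('X : {poly k}) != 0 by rewrite tofrac_eq0 polyX_eq0.
apply/eqP => e; have : tofrac ('X : {poly k}) ^+ ((A + C) * d.+1) = 1.
  by rewrite mulnDl exprD (exprM _ A) (exprM _ C) e exprVn mulVf ?expf_neq0.
rewrite -rmorphXn -tofrac1 => /eqP; rewrite tofrac_eq => /eqP XN1.
have := congr1 (fun p : {poly k} => size p) XN1; rewrite size_polyXn size_poly1 => -[] /eqP.
by rewrite muln_eq0 addn_eq0 (negbTE (lt0n_neq0 A_gt0)).
Qed.

Unset Implicit Arguments. Set Strict Implicit. Set Printing Implicit Defensive.

Theorem lemma2p1 (k : fieldType) (n d : nat) (f : {mpoly k[n]}) :
  f \is (d.+1).-homog ->
  is_direct_sum d f ->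
  (* (1) *)
  ((exists a : k, a != 0 /\ a != 1) ->
    exists (Q : 'M[k]_n) (w : 'I_n -> int),
      one_param_subgroup Q w /\
      (* rho . <grad f> = <grad f>  (on all field-valued points of G_m) *)
      (forall (K : fieldType) (iota : {rmorphism k -> K}) (t : K), t != 0 ->
         same_sp (act_sp (rho_at iota Q w t) (grad_span (map_mpoly iota f)))
                 (grad_span (map_mpoly iota f))) /\
      (* rho . bar f <> bar f *)
      (exists (K : fieldType) (iota : {rmorphism k -> K}) (t : K), t != 0 /\
         ~ same_point (map_mpoly iota f) (act (rho_at iota Q w t) (map_mpoly iota f))) /\
      (* consequently Stab_SL(bar f) is a subgroup of Stab_SL(<grad f>)
         (and proper, witnessed by rho) *)
      (forall (K : fieldType) (iota : {rmorphism k -> K}) (g : 'M[K]_n),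
         \det g = 1 -> same_point (map_mpoly iota f) (act g (map_mpoly iota f)) ->
         same_sp (act_sp g (grad_span (map_mpoly iota f))) (grad_span (map_mpoly iota f)))) /\
  (* (2) *)
  (exists G : k -> {mpoly k[n]},
     (forall c, c != 0 ->
        G c \is (d.+1).-homog /\ G c != 0 /\ same_sp (grad_span (G c)) (grad_span f)) /\
     (forall c c', c != 0 -> c' != 0 -> c != c' -> ~ same_point (G c) (G c'))) /\
  (* (3) *)
  ((forall c : 'I_n -> k, \sum_(i < n) c i *: mderiv i f = 0 -> forall i, c i = 0) ->
     is_balanced_direct_sum d (grad_span f) /\
     exists G : k -> {mpoly k[n]},
       (forall c, c != 0 -> c != 1 ->
          G c \is (d.+1).-homog /\ G c != 0 /\ same_sp (grad_span (G c)) (grad_span f) /\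
          (forall e : k, exists i : 'I_n, mderiv i (f - e *: G c) != 0)) /\
       (forall c c', c != 0 -> c != 1 -> c' != 0 -> c' != 1 -> c != c' ->
          ~ same_point (G c) (G c'))).
Proof.
move=> _ [U [W [UW_full [UW_cap0 [f1 [f2 [f1_neq0 [f2_neq0 [f1U [f2W ->]]]]]]]]]].
have dimU_bounds : (0 < \dim U < n)%N.
  by rewrite (dimU_gt0 f1_neq0 f1U) (dimU_lt UW_full UW_cap0 f2_neq0 f2W).
have free12 := pencil_distinct UW_full UW_cap0 f1_neq0 f2_neq0 f1U f2W.
have grad12 := grad_span_pencil UW_full UW_cap0 f1U f2W.
have homog12 := pencil_homog f1U f2W.
have neq0_12 := pencil_neq0 UW_full UW_cap0 f1_neq0 f2_neq0 f1U f2W.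
split; last split.
-
  move=> _.
  have [A [C [A_gt0 rho]]] :=
    one_param_split_weight (invmx_compl_unit UW_full UW_cap0) dimU_bounds.
  exists (invmx (compl_mx U W)), (split_weight (\dim U) A C); split=> //; split; [|split].
  + move=> K iota t t0; rewrite rho_at_split_weight.
    by apply: (torus_grad_stable UW_full UW_cap0 f1U f2W iota); rewrite ?invr_eq0 expf_neq0.
  + exists {fraction {poly k}}, (@tofrac _ \o polyC), (tofrac 'X).
    split; first by rewrite tofrac_eq0 polyX_eq0.
    rewrite rho_at_split_weight.
    apply: (torus_moves UW_full UW_cap0 f1_neq0 f2_neq0 f1U f2W). exact: fracX_pow_neq A_gt0.
  + move=> K iota g det_g [c [c0 gf]].
    by apply: act_sp_grad_stab c0 gf; rewrite unitmxE det_g unitr1.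
- exists (pencil f1 f2); split=> [c c0 | c c' _ _]; last exact: free12.
  split; first exact: homog12.
  by split; [exact: neq0_12 | exact: grad12].
move=> grad_free; split.
  exact: (balanced_grad UW_full UW_cap0 f1_neq0 f2_neq0 f1U f2W grad_free).
exists (pencil f1 f2); split=> [c c0 c1 | c c' _ _ _ _]; last exact: free12.
split; first exact: homog12.
split; first exact: neq0_12.
split; first exact: grad12.
by move=> e; apply: (pencil_grad_nondeg UW_full UW_cap0 f1_neq0 f2_neq0 f1U f2W grad_free).
Qed.
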